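(* Let $N\ge 4$ and $\bm X^{(N)} := (1+\frac{1}{N-1})\bm I_N - \frac{1}{N-1}\bm 1\bm 1^\top$. Define $\bm Y^{(N)}\in\mathbb{R}^{N^2\times N^2}$ by $$Y^{(N)}_{(ij)(k\ell)} = \begin{cases} 1 & |\mathsf{odd}((ijk\ell))| = 0,\\ -\frac{1}{N-1} & |\mathsf{odd}((ijk\ell))| = 2,\\ \frac{3}{(N-1)(N-3)} & |\mathsf{odd}((ijk\ell))| = 4.\end{cases}$$ Then $\bm Y^{(N)}$ is a degree 4 pseudomoment matrix extending $\bm X^{(N)}$.
   Context: For a string $(ijk\ell)$ of symbols from $[N]$, $\mathsf{odd}((ijk\ell))$ is the set of symbols occurring an odd number of times in it (its size is always $0$, $2$ or $4$). A degree 4 pseudomoment matrix is a matrix $\bm Y \in \mathbb{R}^{N^2\times N^2}$, rows and columns indexed by pairs $(ij)\in[N]^2$ (lexicographically ordered), such that: (1) $\bm Y\succeq 0$; (2) $Y_{(ij)(kk)}$ does not depend on $k$; (3) $Y_{(ii)(ii)} = 1$ for all $i$; (4) $Y_{(ij)(k\ell)}$ is invariant under all permutations of the four indices $i,j,k,\ell$. Such $\bm Y$ extends $\bm X\in\mathbb{R}^{N\times N}_{\mathrm{sym}}$ if $Y_{(1i)(1j)} = X_{ij}$ for all $i,j$. *)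

From HB Require Import structures.
From mathcomp Require Import all_boot all_order all_algebra all_fingroup.
Set Implicit Arguments. Unset Strict Implicit. Unset Printing Implicit Defensive.
Import Order.TTheory GRing.Theory Num.Theory.
Local Open Scope ring_scope.

Definition psdmx (R : realFieldType) (n : nat) (A : 'M[R]_n) : Prop :=
  A^T = A /\ forall v : 'cV[R]_n, 0 <= (v^T *m A *m v) 0 0.

Lemma pidx_proof (N : nat) (i j : 'I_N) : (i * N + j < N * N)%N.
Proof.
have := ltn_ord i; have := ltn_ord j => hj hi.
apply: (@leq_trans (i * N + N)); first by rewrite ltn_add2l.
by rewrite -mulSnr leq_mul2r hi orbT.
Qed.

Definition pidx (N : nat) (i j : 'I_N) : 'I_(N * N) := Ordinal (pidx_proof i j).

Definition Yent (R : realFieldType) (N : nat) (Y : 'M[R]_(N * N))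
  (i j k l : 'I_N) : R := Y (pidx i j) (pidx k l).

Definition odd_size (s : seq nat) : nat :=
  size [seq x <- undup s | odd (count_mem x s)].

Definition o0 : 'I_4 := @Ordinal 4 0 isT.
Definition o1 : 'I_4 := @Ordinal 4 1 isT.
Definition o2 : 'I_4 := @Ordinal 4 2 isT.
Definition o3 : 'I_4 := @Ordinal 4 3 isT.

Definition pseudomoment4 (R : realFieldType) (N : nat) (Y : 'M[R]_(N * N)) : Prop :=
  [/\ psdmx Y,
      (forall i j k k' : 'I_N, Yent Y i j k k = Yent Y i j k' k'),
      (forall i : 'I_N, Yent Y i i i i = 1) &
      (forall (f : 'I_4 -> 'I_N) (s : 'S_4),
          Yent Y (f (s o0)) (f (s o1)) (f (s o2)) (f (s o3))
          = Yent Y (f o0) (f o1) (f o2) (f o3))].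

(* Y extends X: Y_{(1i)(1j)} = X_{ij}, where 1 is the first index *)
Definition extends (R : realFieldType) (N : nat) (Y : 'M[R]_(N * N)) (X : 'M[R]_N) : Prop :=
  forall (o : 'I_N), nat_of_ord o = 0%N -> forall i j : 'I_N, Yent Y o i o j = X i j.

Definition Xmat (R : realFieldType) (N : nat) : 'M[R]_N :=
  \matrix_(i < N, j < N)
    ((1 + 1 / (N - 1)%:R) * (i == j)%:R - 1 / (N - 1)%:R).

Definition Yval (R : realFieldType) (N : nat) (i j k l : nat) : R :=
  match odd_size [:: i; j; k; l] with
  | 0%N => 1
  | 2%N => - (1 / (N - 1)%:R)
  | 4%N => 3 / ((N - 1)%:R * (N - 3)%:R)
  | _ => 0
  end.

Definition Ymat (R : realFieldType) (N : nat) : 'M[R]_(N * N) :=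
  \matrix_(a < N * N, b < N * N)
    Yval R N (a %/ N) (a %% N) (b %/ N) (b %% N).

From HB Require Import structures.
From mathcomp Require Import all_boot all_order all_algebra all_fingroup.
From mathcomp Require Import ring lra.
Set Implicit Arguments. Unset Strict Implicit. Unset Printing Implicit Defensive.
Import Order.TTheory GRing.Theory Num.Theory.
Local Open Scope ring_scope.

(* The entry Y_{(ij)(kl)} depends only on |odd((ijkl))|, which is invariant
   under permutations of the four symbols and under replacing a repeated pair
   (kk) by another repeated pair; this gives the linear conditions of a
   pseudomoment matrix and the extension of X (whose entries are Y_{(1i)(1j)}).
   Positive semidefiniteness is the real content.  We expand the entry as a
   polynomial [ydelta] in the Kronecker deltas of the four symbols.  The
   quadratic form v^T Y v is a fourfold sum of v_{ij} v_{kl} Y_{(ij)(kl)};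
   since Y is symmetric in i,j and in k,l we may replace v by its symmetric
   part W.  The deltas collapse the sum to six moments of W (total sum,
   trace, Frobenius norm, and the sums of r_i^2, d_i r_i, d_i^2 for the row
   sums r_i and diagonal entries d_i), and an explicit identity writes
   (N-1)(N-3) v^T Y v as a nonnegative combination of the square
   ((N-1) tr W - offdiagonal sum of W)^2 and of the squares
   (m W_ij - p_i - p_j)^2 over i <> j, for suitable m and p_i. *)

Lemma odd_sizeE (s U : seq nat) : uniq U -> {subset s <= U} ->
  odd_size s = size [seq x <- U | odd (count_mem x s)].
Proof.
move=> uU sU; rewrite /odd_size; apply/perm_size/uniq_perm.
- by rewrite filter_uniq // undup_uniq.
- by rewrite filter_uniq.
move=> x; rewrite !mem_filter mem_undup; case Ox: (odd _) => //=.
have xs : x \in s by rewrite -has_pred1 has_count; case: (count _ _) Ox.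
by rewrite xs sU.
Qed.

Lemma odd_size_perm (s t : seq nat) : perm_eq s t -> odd_size s = odd_size t.
Proof.
move=> st; have sub u : {subset u <= undup s} -> _ := odd_sizeE (undup_uniq s).
rewrite (sub s) => [|x]; last by rewrite mem_undup.
rewrite (sub t) => [|x]; last by rewrite mem_undup (perm_mem st).
by congr size; apply: eq_filter => x; rewrite (seq.permP st).
Qed.

(* A repeated symbol never occurs an odd number of times, whichever it is. *)
Lemma odd_size_pair (i j k k' : nat) :
  odd_size [:: i; j; k; k] = odd_size [:: i; j; k'; k'].
Proof.
pose U := undup [:: i; j; k; k'].
have sub u : {subset u <= [:: i; j; k; k']} ->
    odd_size u = size [seq x <- U | odd (count_mem x u)].
  by move=> su; apply: odd_sizeE (undup_uniq _) _ => x /su; rewrite mem_undup.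
rewrite !sub; try by apply/allP; rewrite /= !inE !eqxx ?orbT.
by congr size; apply: eq_filter => x /=; rewrite !addn0 !oddD addbb addbA addbb !addbF.
Qed.

Lemma neq_false (T : eqType) (a b : T) : a != b -> (a == b) = false /\ (b == a) = false.
Proof. by move=> ab; rewrite (negbTE ab) eq_sym (negbTE ab). Qed.

(* Tactics deciding a goal whose value depends only on which of finitely many
   symbols are equal: [split_eq x y] splits on x = y (identifying them in the
   goal, and skipping symbols already identified with others), and
   [eval_eqs] then evaluates every remaining comparison. *)
Ltac split_eq x y :=
  match goal with
  | |- context[x] =>
      match goal with |- context[y] => case: (eqVneq x y) => [<-|?] | _ => idtac end
  | _ => idtac
  end.

Ltac eval_eqs :=
  repeat match goal with H : is_true (?a != ?b) |- _ => case: (neq_false H) => ? ?; clear H end;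
  do 4 (rewrite ?inE ?eqxx;
        repeat match goal with H : (?a == ?b) = false |- context[?a == ?b] => rewrite H end;
        try rewrite [size _]/=).

Definition kdelta (R : ringType) (T : eqType) (x y : T) : R := (x == y)%:R.

Section Entries.
Variables (R : realFieldType) (N : nat).

Definition ycoef2 : R := - (1 / (N - 1)%:R).
Definition ycoef4 : R := 3 / ((N - 1)%:R * (N - 3)%:R).

Definition ydelta (T : eqType) (i j k l : T) : R :=
  let d := @kdelta R T in
  ycoef4 + (ycoef2 - ycoef4) * (d i j + d i k + d i l + d j k + d j l + d k l)
  + (1 - 2 * ycoef2 + ycoef4) * (d i j * d k l + d i k * d j l + d i l * d j k)
  + 2 * (ycoef4 - ycoef2) * (d i j * d i k + d i j * d i l + d i k * d i l + d j k * d j l)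
  + (-2 - 6 * ycoef4 + 8 * ycoef2) * (d i j * d i k * d i l).

Lemma Yval_delta (i j k l : nat) : Yval R N i j k l = ydelta i j k l.
Proof.
split_eq i j; split_eq i k; split_eq i l; split_eq j k; split_eq j l; split_eq k l.
all: rewrite /Yval /odd_size /ydelta /kdelta; eval_eqs.
all: rewrite [LHS]/= /ycoef2 /ycoef4 ?mulr1n ?mulr0n; ring.
Qed.

Lemma Yval_diag (z a b : nat) : Yval R N z a z b = if a == b then 1 else ycoef2.
Proof.
split_eq z a; split_eq z b; split_eq a b.
all: rewrite /Yval /odd_size; eval_eqs; by [].
Qed.

Lemma Yval_perm (a b c d a' b' c' d' : nat) :
  perm_eq [:: a; b; c; d] [:: a'; b'; c'; d'] -> Yval R N a b c d = Yval R N a' b' c' d'.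
Proof. by move=> p; rewrite /Yval (odd_size_perm p). Qed.

Lemma Yval_swap12 (a b c d : nat) : Yval R N a b c d = Yval R N b a c d.
Proof. by apply: Yval_perm; apply/seq.permP => p /=; rewrite addnCA. Qed.

Lemma Yval_swap34 (a b c d : nat) : Yval R N a b c d = Yval R N a b d c.
Proof. by apply: Yval_perm; apply/seq.permP => p /=; rewrite !addn0 [(p c + p d)%N]addnC. Qed.

Lemma Yval_swap_pairs (a b c d : nat) : Yval R N a b c d = Yval R N c d a b.
Proof. by apply: Yval_perm; rewrite -[X in perm_eq X _]/([:: a; b] ++ [:: c; d]) perm_catC. Qed.

End Entries.

Definition idx4 : seq 'I_4 := [:: o0; o1; o2; o3].

Lemma perm_idx4 (s : 'S_4) : perm_eq (map s idx4) idx4.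
Proof.
have mem4 x : x \in idx4 by case: x => [[|[|[|[|]]]]].
apply: uniq_perm => //; first by rewrite map_inj_uniq //; exact: perm_inj.
by move=> x; rewrite mem4 -(permKV s x) map_f.
Qed.

Section FourfoldSums.
Variables (R : comRingType) (I : finType).

Definition sum4 (F : I -> I -> I -> I -> R) : R :=
  \sum_i \sum_j \sum_k \sum_l F i j k l.

Lemma eq_sum4 (F G : I -> I -> I -> I -> R) :
  (forall i j k l, F i j k l = G i j k l) -> sum4 F = sum4 G.
Proof.
move=> FG; apply: eq_bigr => i _; apply: eq_bigr => j _.
by apply: eq_bigr => k _; apply: eq_bigr => l _.
Qed.

Lemma sum4D (F G : I -> I -> I -> I -> R) :
  sum4 (fun i j k l => F i j k l + G i j k l) = sum4 F + sum4 G.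
Proof.
rewrite /sum4 -big_split; apply: eq_bigr => i _; rewrite -big_split.
by apply: eq_bigr => j _; rewrite -big_split; apply: eq_bigr => k _; rewrite -big_split.
Qed.

Lemma sum4Z (c : R) (F : I -> I -> I -> I -> R) :
  sum4 (fun i j k l => c * F i j k l) = c * sum4 F.
Proof.
rewrite /sum4 mulr_sumr; apply: eq_bigr => i _; rewrite mulr_sumr.
by apply: eq_bigr => j _; rewrite mulr_sumr; apply: eq_bigr => k _; rewrite mulr_sumr.
Qed.

Lemma sum4_swap12 (F : I -> I -> I -> I -> R) : sum4 F = sum4 (fun i j k l => F j i k l).
Proof. exact: exchange_big. Qed.

Lemma sum4_swap34 (F : I -> I -> I -> I -> R) : sum4 F = sum4 (fun i j k l => F i j l k).
Proof. by apply: eq_bigr => i _; apply: eq_bigr => j _; rewrite exchange_big. Qed.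

Lemma sum4_swap_pairs (F : I -> I -> I -> I -> R) : sum4 F = sum4 (fun i j k l => F k l i j).
Proof.
rewrite /sum4; under eq_bigr => i _ do rewrite exchange_big.
under eq_bigr => i _ do under eq_bigr => k _ do rewrite exchange_big.
by rewrite exchange_big; apply: eq_bigr => k _; rewrite exchange_big.
Qed.

End FourfoldSums.

Lemma sum4_symmetrize (R : numFieldType) (I : finType) (V : I -> I -> R)
    (y : I -> I -> I -> I -> R) :
    (forall i j k l, y i j k l = y j i k l) -> (forall i j k l, y i j k l = y i j l k) ->
  sum4 (fun i j k l => V i j * V k l * y i j k l) =
  sum4 (fun i j k l => (V i j + V j i) / 2 * ((V k l + V l k) / 2) * y i j k l).
Proof.
move=> y12 y34; set A := sum4 _.
have -> : sum4 (fun i j k l => (V i j + V j i) / 2 * ((V k l + V l k) / 2) * y i j k l) =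
    4^-1 * (A + sum4 (fun i j k l => V j i * V k l * y i j k l)
          + (sum4 (fun i j k l => V i j * V l k * y i j k l)
          + sum4 (fun i j k l => V j i * V l k * y i j k l))).
  by rewrite -!sum4D -sum4Z; apply: eq_sum4 => i j k l; field.
have flip12 : sum4 (fun i j k l => V j i * V k l * y i j k l) = A.
  by rewrite sum4_swap12; apply: eq_sum4 => i j k l; rewrite y12.
have flip34 : sum4 (fun i j k l => V i j * V l k * y i j k l) = A.
  by rewrite sum4_swap34; apply: eq_sum4 => i j k l; rewrite y34.
have flip_both : sum4 (fun i j k l => V j i * V l k * y i j k l) = A.
  by rewrite sum4_swap12 sum4_swap34; apply: eq_sum4 => i j k l; rewrite y34 y12.
by rewrite flip12 flip34 flip_both; field.
Qed.

Lemma sum_kdelta (R : ringType) (I : finType) (i : I) (f : I -> R) :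
  \sum_k kdelta R i k * f k = f i.
Proof.
rewrite (bigD1 i) //= /kdelta eqxx mul1r big1 ?addr0 // => k ki.
by rewrite eq_sym (negbTE ki) mul0r.
Qed.

Lemma kdelta_shift (R : ringType) (T : eqType) (a b c : T) :
  kdelta R c a * kdelta R c b = kdelta R a b * kdelta R a c.
Proof.
rewrite /kdelta; have [<-|_] := eqVneq c a; first by rewrite mulr1 mul1r.
by rewrite mul0r mulr0n mulr0.
Qed.

Section Moments.
Variables (R : realFieldType) (I : finType) (W : I -> I -> R).
Hypothesis Wsym : forall i j, W i j = W j i.
Local Notation d := (@kdelta R I).

Definition qform (g : I -> I -> I -> I -> R) : R :=
  sum4 (fun i j k l => W i j * W k l * g i j k l).

Definition rowsum (i : I) : R := \sum_j W i j.
Definition wtotal : R := \sum_i rowsum i.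
Definition wtrace : R := \sum_i W i i.
Definition wfrob : R := \sum_i \sum_j W i j ^+ 2.
Definition mom_rr : R := \sum_i rowsum i ^+ 2.
Definition mom_dr : R := \sum_i W i i * rowsum i.
Definition mom_dd : R := \sum_i W i i ^+ 2.

Lemma eq_qform (F G : I -> I -> I -> I -> R) :
  (forall i j k l, F i j k l = G i j k l) -> qform F = qform G.
Proof. by move=> FG; apply: eq_sum4 => i j k l; rewrite FG. Qed.

Lemma qformD (F G : I -> I -> I -> I -> R) :
  qform (fun i j k l => F i j k l + G i j k l) = qform F + qform G.
Proof. by rewrite /qform -sum4D; apply: eq_sum4 => *; ring. Qed.

Lemma qformZ (c : R) (F : I -> I -> I -> I -> R) :
  qform (fun i j k l => c * F i j k l) = c * qform F.
Proof. by rewrite /qform -sum4Z; apply: eq_sum4 => *; ring. Qed.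

Lemma qform_swap12 (F : I -> I -> I -> I -> R) : qform F = qform (fun i j k l => F j i k l).
Proof. by rewrite /qform sum4_swap12; apply: eq_sum4 => *; rewrite Wsym. Qed.

Lemma qform_swap34 (F : I -> I -> I -> I -> R) : qform F = qform (fun i j k l => F i j l k).
Proof. by rewrite /qform sum4_swap34; apply: eq_sum4 => i j k l; rewrite (Wsym l). Qed.

Lemma qform_swap_pairs (F : I -> I -> I -> I -> R) :
  qform F = qform (fun i j k l => F k l i j).
Proof. by rewrite /qform sum4_swap_pairs; apply: eq_sum4 => *; ring. Qed.

Lemma qform_const (c : R) : qform (fun _ _ _ _ => c) = c * wtotal ^+ 2.
Proof.
rewrite (@eq_qform _ (fun _ _ _ _ => c * 1)); last by move=> *; rewrite mulr1.
rewrite qformZ /qform /sum4 expr2 /wtotal mulr_suml; congr (_ * _); apply: eq_bigr => i _.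
rewrite /rowsum mulr_suml; apply: eq_bigr => j _.
rewrite mulr_sumr; apply: eq_bigr => k _.
by rewrite mulr_sumr; apply: eq_bigr => l _; rewrite mulr1.
Qed.

Lemma qform_ij : qform (fun i j _ _ => d i j) = wtrace * wtotal.
Proof.
rewrite /qform /sum4 /wtrace mulr_suml; apply: eq_bigr => i _.
under eq_bigr => j _.
  rewrite (_ : \sum_k _ = d i j * (W i j * wtotal)); first over.
  rewrite /wtotal !mulr_sumr; apply: eq_bigr => k _.
  by rewrite /rowsum !mulr_sumr; apply: eq_bigr => l _; ring.
by rewrite sum_kdelta.
Qed.
Lemma qform_ik : qform (fun i _ k _ => d i k) = mom_rr.
Proof.
rewrite /qform /sum4 /mom_rr; apply: eq_bigr => i _.
rewrite (eq_bigr (fun j => W i j * rowsum i)) => [|j _]; first by rewrite -mulr_suml expr2.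
rewrite (eq_bigr (fun k => d i k * (W i j * rowsum k))) ?sum_kdelta // => k _.
by rewrite /rowsum !mulr_sumr; apply: eq_bigr => l _; ring.
Qed.

Lemma qform_ij_kl : qform (fun i j k l => d i j * d k l) = wtrace ^+ 2.
Proof.
rewrite /qform /sum4 expr2 {1}/wtrace mulr_suml; apply: eq_bigr => i _.
rewrite (eq_bigr (fun j => d i j * (W i j * wtrace))) ?sum_kdelta // => j _.
rewrite /wtrace !mulr_sumr; apply: eq_bigr => k _.
rewrite (eq_bigr (fun l => d k l * (W i j * W k l * d i j))) => [|l _]; last by ring.
by rewrite sum_kdelta; ring.
Qed.

Lemma qform_ik_jl : qform (fun i j k l => d i k * d j l) = wfrob.
Proof.
rewrite /qform /sum4 /wfrob; apply: eq_bigr => i _; apply: eq_bigr => j _.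
rewrite (eq_bigr (fun k => d i k * (W i j * W k j))) => [|k _]; first by rewrite sum_kdelta expr2.
rewrite (eq_bigr (fun l => d j l * (W i j * W k l * d i k))) => [|l _]; last by ring.
by rewrite sum_kdelta; ring.
Qed.

Lemma qform_ij_ik : qform (fun i j k l => d i j * d i k) = mom_dr.
Proof.
rewrite /qform /sum4 /mom_dr; apply: eq_bigr => i _.
rewrite (eq_bigr (fun j => d i j * (W i j * rowsum i))) ?sum_kdelta // => j _.
rewrite (eq_bigr (fun k => d i k * (d i j * W i j * rowsum k))) => [|k _].
  by rewrite sum_kdelta; ring.
by rewrite /rowsum !mulr_sumr; apply: eq_bigr => l _; ring.
Qed.

Lemma qform_ij_ik_il : qform (fun i j k l => d i j * d i k * d i l) = mom_dd.
Proof.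
rewrite /qform /sum4 /mom_dd; apply: eq_bigr => i _.
rewrite (eq_bigr (fun j => d i j * (W i j * W i i))) => [|j _]; first by rewrite sum_kdelta expr2.
rewrite (eq_bigr (fun k => d i k * (d i j * W i j * W k i))) => [|k _].
  by rewrite sum_kdelta; ring.
rewrite (eq_bigr (fun l => d i l * (d i j * d i k * W i j * W k l))) => [|l _]; last by ring.
by rewrite sum_kdelta; ring.
Qed.

Lemma qform_ydelta (m : nat) :
  qform (fun i j k l => ydelta R m i j k l) =
  ycoef4 R m * wtotal ^+ 2
  + (ycoef2 R m - ycoef4 R m) * (2 * wtrace * wtotal + 4 * mom_rr)
  + (1 - 2 * ycoef2 R m + ycoef4 R m) * (wtrace ^+ 2 + 2 * wfrob)
  + 2 * (ycoef4 R m - ycoef2 R m) * (4 * mom_dr)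
  + (-2 - 6 * ycoef4 R m + 8 * ycoef2 R m) * mom_dd.
Proof.
rewrite /ydelta !qformD !qformZ !qformD qform_const.
have qform_kl : qform (fun _ _ k l => d k l) = wtrace * wtotal.
  by rewrite qform_swap_pairs qform_ij.
have qform_il : qform (fun i _ _ l => d i l) = mom_rr by rewrite qform_swap34 qform_ik.
have qform_jk : qform (fun _ j k _ => d j k) = mom_rr by rewrite qform_swap12 qform_ik.
have qform_jl : qform (fun _ j _ l => d j l) = mom_rr.
  by rewrite qform_swap12 qform_swap34 qform_ik.
have qform_il_jk : qform (fun i j k l => d i l * d j k) = wfrob.
  by rewrite qform_swap34 qform_ik_jl.
have qform_ij_il : qform (fun i j k l => d i j * d i l) = mom_dr.
  by rewrite qform_swap34 qform_ij_ik.
have qform_ik_il : qform (fun i j k l => d i k * d i l) = mom_dr.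
  by rewrite qform_swap_pairs -qform_ij_ik; apply: eq_qform => i j k l; rewrite kdelta_shift.
have qform_jk_jl : qform (fun i j k l => d j k * d j l) = mom_dr.
  by rewrite qform_swap12 qform_ik_il.
rewrite qform_ij qform_ik qform_ij_kl qform_ik_jl qform_ij_ik qform_ij_ik_il.
rewrite qform_kl qform_il qform_jk qform_jl qform_il_jk qform_ij_il qform_ik_il qform_jk_jl.
by rewrite /ycoef4; ring.
Qed.

Local Notation n := (#|I|%:R : R).

Definition woff : R := wtotal - wtrace.
Definition sos_coef : R := (n - 1) * (n - 2).
Definition pcorr (i : I) : R := (n - 1) * (rowsum i - W i i) - woff / 2.

Definition sos_all : R := \sum_i \sum_j (sos_coef * W i j - pcorr i - pcorr j) ^+ 2.
Definition sos_diag : R := \sum_i (sos_coef * W i i - 2 * pcorr i) ^+ 2.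

(* sos_all - sos_diag is the sum of the squares over the pairs i <> j. *)
Lemma sos_offdiag_ge0 : 0 <= sos_all - sos_diag.
Proof.
rewrite /sos_all /sos_diag -sumrB; apply: sumr_ge0 => i _.
rewrite (bigD1 i) //=.
have -> : (sos_coef * W i i - pcorr i - pcorr i) ^+ 2 = (sos_coef * W i i - 2 * pcorr i) ^+ 2.
  by ring.
by rewrite addrC addrK; apply: sumr_ge0 => j _; exact: sqr_ge0.
Qed.

Lemma sos_allE : sos_all = sos_coef ^+ 2 * wfrob - 4 * sos_coef * (\sum_i rowsum i * pcorr i)
  + 2 * n * (\sum_i pcorr i ^+ 2) + 2 * (\sum_i pcorr i) ^+ 2.
Proof.
rewrite /sos_all (eq_bigr (fun i => \sum_j sos_coef ^+ 2 * W i j ^+ 2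
     + \sum_j (-2 * sos_coef * pcorr i) * W i j + \sum_j (-2 * sos_coef) * (W i j * pcorr j)
     + \sum_(j : I) pcorr i ^+ 2 + \sum_j 2 * pcorr i * pcorr j + \sum_j pcorr j ^+ 2)); last first.
  by move=> i _; rewrite -!big_split /=; apply: eq_bigr => j _; ring.
set P := \sum_i pcorr i; rewrite !big_split /=.
have frob_part : \sum_i \sum_j sos_coef ^+ 2 * W i j ^+ 2 = sos_coef ^+ 2 * wfrob.
  by rewrite /wfrob mulr_sumr; apply: eq_bigr => i _; rewrite mulr_sumr.
have row_cross : \sum_i \sum_j (-2 * sos_coef * pcorr i) * W i j
    = -2 * sos_coef * \sum_i rowsum i * pcorr i.
  by rewrite mulr_sumr; apply: eq_bigr => i _; rewrite -mulr_sumr -/(rowsum i); ring.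
have col_cross : \sum_i \sum_j (-2 * sos_coef) * (W i j * pcorr j)
    = -2 * sos_coef * \sum_i rowsum i * pcorr i.
  rewrite exchange_big mulr_sumr; apply: eq_bigr => j _; rewrite /rowsum -mulr_sumr.
  by congr (_ * _); rewrite mulr_suml; apply: eq_bigr => i _; rewrite Wsym.
have row_sq : \sum_i \sum_(j : I) pcorr i ^+ 2 = n * \sum_i pcorr i ^+ 2.
  by rewrite mulr_sumr; apply: eq_bigr => i _; rewrite sumr_const mulr_natl.
have mixed_part : \sum_i \sum_j 2 * pcorr i * pcorr j = 2 * P ^+ 2.
  rewrite /P expr2 mulr_suml mulr_sumr; apply: eq_bigr => i _; rewrite !mulr_sumr.
  by apply: eq_bigr => j _; ring.
have col_sq : \sum_(i : I) \sum_j pcorr j ^+ 2 = n * \sum_i pcorr i ^+ 2.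
  by rewrite sumr_const mulr_natl.
by rewrite frob_part row_cross col_cross row_sq mixed_part col_sq; ring.
Qed.

Lemma sum_moments (c1 c2 c3 c4 c5 c6 : R) :
  \sum_i (c1 * rowsum i ^+ 2 + c2 * (W i i * rowsum i) + c3 * W i i ^+ 2
           + c4 * rowsum i + c5 * W i i + c6)
  = c1 * mom_rr + c2 * mom_dr + c3 * mom_dd + c4 * wtotal + c5 * wtrace + n * c6.
Proof. by rewrite !big_split /= -!mulr_sumr sumr_const mulr_natl. Qed.

Lemma qform_ydelta_sos : (4 <= #|I|)%N ->
  qform (fun i j k l => ydelta R #|I| i j k l) * ((n - 1) * (n - 3)) =
  (n - 3) / (n - 1) * ((n - 1) * wtrace - woff) ^+ 2
  + 2 * n / ((n - 2) * (n - 1) ^+ 2) * (sos_all - sos_diag).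
Proof.
move=> n4; have n3 : 0 < n - 3 by rewrite subr_gt0 (ltr_nat R 3).
have natB1 : (#|I| - 1)%:R = n - 1 by rewrite natrB //; apply: leq_trans n4.
have natB3 : (#|I| - 3)%:R = n - 3 by rewrite natrB //; apply: leq_trans n4.
have rp_moments : \sum_i rowsum i * pcorr i = (n - 1) * mom_rr + - (n - 1) * mom_dr + 0 * mom_dd
    + - (woff / 2) * wtotal + 0 * wtrace + n * 0.
  by rewrite -sum_moments; apply: eq_bigr => i _; rewrite /pcorr; field.
have p2_moments : \sum_i pcorr i ^+ 2 = (n - 1) ^+ 2 * mom_rr + -2 * (n - 1) ^+ 2 * mom_dr
    + (n - 1) ^+ 2 * mom_dd + - (n - 1) * woff * wtotal + (n - 1) * woff * wtrace
    + n * (woff / 2) ^+ 2.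
  by rewrite -sum_moments; apply: eq_bigr => i _; rewrite /pcorr; field.
have p_moments : \sum_i pcorr i = 0 * mom_rr + 0 * mom_dr + 0 * mom_dd + (n - 1) * wtotal
    + - (n - 1) * wtrace + n * - (woff / 2).
  by rewrite -sum_moments; apply: eq_bigr => i _; rewrite /pcorr; field.
have diag_moments : sos_diag = 4 * (n - 1) ^+ 2 * mom_rr
    + -4 * (n - 1) * (sos_coef + 2 * (n - 1)) * mom_dr + (sos_coef + 2 * (n - 1)) ^+ 2 * mom_dd
    + -4 * (n - 1) * woff * wtotal + 2 * (sos_coef + 2 * (n - 1)) * woff * wtrace
    + n * woff ^+ 2.
  by rewrite /sos_diag -sum_moments; apply: eq_bigr => i _; rewrite /pcorr; field.
rewrite qform_ydelta sos_allE rp_moments p2_moments p_moments diag_moments.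
rewrite /ycoef2 /ycoef4 natB1 natB3 /woff /sos_coef.
by field; rewrite !gt_eqF //; lra.
Qed.

Lemma qform_ydelta_ge0 : (4 <= #|I|)%N -> 0 <= qform (fun i j k l => ydelta R #|I| i j k l).
Proof.
move=> n4; have n3 : 0 < n - 3 by rewrite subr_gt0 (ltr_nat R 3).
rewrite -(pmulr_lge0 _ (_ : 0 < (n - 1) * (n - 3))); last by apply: mulr_gt0; lra.
rewrite qform_ydelta_sos //; apply: addr_ge0; apply: mulr_ge0.
- by apply: divr_ge0; lra.
- exact: sqr_ge0.
- by apply: divr_ge0; [|apply: mulr_ge0; [|apply: exprn_ge0]]; lra.
- exact: sos_offdiag_ge0.
Qed.

End Moments.

Section PairIndex.
Variable N : nat.

Lemma pidx_div (i j : 'I_N) : (pidx i j %/ N)%N = i.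
Proof.
have N_gt0 : (0 < N)%N by apply: leq_ltn_trans (ltn_ord i).
by rewrite /= divnMDl // divn_small ?addn0.
Qed.

Lemma pidx_mod (i j : 'I_N) : (pidx i j %% N)%N = j.
Proof. by rewrite /= modnMDl modn_small. Qed.

Lemma Yent_Yval (R : realFieldType) (i j k l : 'I_N) :
  Yent (Ymat R N) i j k l = Yval R N i j k l.
Proof. by rewrite /Yent mxE !pidx_div !pidx_mod. Qed.

Lemma sum_pairs (R : nmodType) (F : 'I_(N * N) -> R) :
  (0 < N)%N -> \sum_a F a = \sum_i \sum_j F (pidx i j).
Proof.
move=> N_gt0; rewrite pair_big /= (reindex (fun p : 'I_N * 'I_N => pidx p.1 p.2)) //=.
have div_lt (a : 'I_(N * N)) : (a %/ N < N)%N by rewrite ltn_divLR.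
apply: onW_bij; exists (fun a => (Ordinal (div_lt a), Ordinal (ltn_pmod a N_gt0))).
  by move=> [i j]; congr pair; apply: val_inj; rewrite /= ?pidx_div ?pidx_mod.
by move=> a; apply: val_inj; rewrite /= -divn_eq.
Qed.

Lemma Ymat_form (R : realFieldType) (v : 'cV[R]_(N * N)) : (0 < N)%N ->
  (v^T *m Ymat R N *m v) 0 0 =
  sum4 (fun i j k l => v (pidx i j) 0 * v (pidx k l) 0 * Yval R N i j k l).
Proof.
move=> N_gt0; rewrite mxE; under eq_bigr do rewrite mxE mulr_suml.
rewrite exchange_big sum_pairs //; apply: eq_bigr => i _; apply: eq_bigr => j _.
rewrite sum_pairs //; apply: eq_bigr => k _; apply: eq_bigr => l _.
by rewrite !mxE !pidx_div !pidx_mod; ring.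
Qed.

End PairIndex.

(* Y is positive semidefinite: its form, symmetrized, is the nonnegative
   quartic form of the symmetric part of v. *)
Lemma Ymat_psd (R : realFieldType) (N : nat) : (4 <= N)%N -> psdmx (Ymat R N).
Proof.
move=> N4; split; first by apply/matrixP => a b; rewrite !mxE Yval_swap_pairs.
move=> v; rewrite Ymat_form; last by apply: leq_trans N4.
rewrite (sum4_symmetrize _ (y := fun i j k l : 'I_N => Yval R N i j k l)); last 2 first.
- by move=> i j k l; apply: Yval_swap12.
- by move=> i j k l; apply: Yval_swap34.
pose W i j := (v (pidx i j) 0 + v (pidx j i) 0) / 2.
have Wsym i j : W i j = W j i by rewrite /W addrC.
have := qform_ydelta_ge0 Wsym; rewrite card_ord => /(_ N4).
by congr (_ <= _); apply: eq_sum4 => i j k l; rewrite Yval_delta.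
Qed.

(* The linear conditions follow from the invariances of |odd|, and the
   entries Y_{(1i)(1j)} are 1 on the diagonal and -1/(N-1) off it. *)
Theorem corollary6 (R : realFieldType) (N : nat) (hN : (4 <= N)%N) :
  pseudomoment4 (Ymat R N) /\ extends (Ymat R N) (Xmat R N).
Proof.
split; [split|].
- exact: Ymat_psd.
- by move=> i j k k'; rewrite !Yent_Yval /Yval (odd_size_pair _ _ _ k').
- by move=> i; rewrite Yent_Yval Yval_diag eqxx.
- move=> f s; rewrite !Yent_Yval; apply: Yval_perm.
  exact: (perm_map (fun x => nat_of_ord (f x)) (perm_idx4 s)).
- move=> o _ i j; rewrite Yent_Yval Yval_diag mxE /ycoef2.
  have [->|ij] := eqVneq i j; first by rewrite !eqxx mulr1n; ring.
  by rewrite (negbTE ij : (nat_of_ord i == j) = false) mulr0n; ring.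
Qed.
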